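(* Fix $x_0\in\mathbb{R}^{n_x}$. There exist a finite positive constant $\alpha_1'(x_0)$ and, for each $i\in\{2,\dots,T+1\}$, a finite set $\mathcal{K}_i'$ of sequences of non-negative integers of length $i-1$ and finite positive constants $\alpha_i'^{(j_1,\dots,j_{i-1})}(x_0)$ (depending on $x_0$ and $(j_1,\dots,j_{i-1})$ but not on the observations or the control) such that for every $u\in U$ and every $(y_1,\dots,y_T)$, the trajectory $x$ of the hybrid system starting at $x_0$ satisfies: $|c(x_1(t),u(t))|\le\alpha_1'(x_0)$ for all $t\in[0,1]$; for all $i\in\{2,\dots,T\}$ and $t\in[i-1,i]$, $$|c(x_i(t),u(t))|\le\sum_{(j_1,\dots,j_{i-1})\in\mathcal{K}_i'}\alpha_i'^{(j_1,\dots,j_{i-1})}(x_0)\prod_{m=1}^{i-1}\|y_m\|_2^{j_m};$$ and $$|h(x(T))|\le\sum_{(j_1,\dots,j_T)\in\mathcal{K}_{T+1}'}\alpha_{T+1}'^{(j_1,\dots,j_T)}(x_0)\prod_{m=1}^{T}\|y_m\|_2^{j_m}.$$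
   Context: Fix positive integers $T,m,n_x,n_y$ and $\rho_{\max}\in(0,\infty)$; $B(0,\rho_{\max})$ is the closed Euclidean ball of radius $\rho_{\max}$ in $\mathbb{R}^m$; $U$ is the set of piecewise continuous $u:[0,T]\to\mathbb{R}^m$ with $\|u(t)\|_2\le\rho_{\max}$ for all $t$. $f:\mathbb{R}^{n_x}\times\mathbb{R}^m\to\mathbb{R}^{n_x}$ is continuously differentiable and there is $K_1\in[1,\infty)$ with $\|f(x',u')-f(x'',u'')\|_2\le K_1(\|x'-x''\|_2+\|u'-u''\|_2)$ for all $x',x''$ and $u',u''\in B(0,\rho_{\max})$. $g:\mathbb{R}^{n_x}\times\mathbb{R}^{n_y}\to\mathbb{R}^{n_x}$ is continuous and differentiable in its first argument, and there are $K_2,\dots,K_5\ge0$ and positive integers $L_1,L_2$ such that for all $x,y$ both $\|g(x,y)\|_2$ and $\|\frac{\partial}{\partial x}g(x,y)\|_2$ are at most $K_2+K_3\|x\|_2^{L_1}+K_4\|y\|_2^{L_2}+K_5\|x\|_2^{L_1}\|y\|_2^{L_2}$. The hybrid system: $x_1$ on $[0,1]$ solves $\dot x_1=f(x_1,u)$, $x_1(0)=x_0$; for $i=2,\dots,T$, $x_i$ on $[i-1,i]$ solves $\dot x_i=f(x_i,u)$ with $x_i(i-1)=g(x_{i-1}(i-1),y_{i-1})$; $x(t)=x_i(t)$ for $t\in[i-1,i)$, and $x(T)=g(x_T(T),y_T)$. Costs: $c:\mathbb{R}^{n_x}\times\mathbb{R}^m\to\mathbb{R}$ is continuous and continuously differentiable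 in $x$, $h:\mathbb{R}^{n_x}\to\mathbb{R}$ is differentiable, and there are $K_6,K_7\ge0$ and a positive integer $L_3$ such that $|c(x,u)|$, $\|\frac{\partial}{\partial x}c(x,u)\|_2$, $|h(x)|$, $\|\frac{\partial}{\partial x}h(x)\|_2$ are all at most $K_6+K_7\|x\|_2^{L_3}$ for all $x$ and $u\in B(0,\rho_{\max})$. *)

From HB Require Import structures.
From mathcomp Require Import all_boot all_order all_algebra.
From mathcomp Require Import all_classical all_reals all_analysis.
Set Implicit Arguments. Unset Strict Implicit. Unset Printing Implicit Defensive.
Import Order.TTheory GRing.Theory Num.Theory.
Import numFieldNormedType.Exports.
Local Open Scope classical_set_scope.
Local Open Scope ring_scope.

Section Defs.
Context {R : realType}.

Definition enorm {n : nat} (v : 'rV[R]_n) : R :=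
  Num.sqrt (\sum_(i < n) v ord0 i ^+ 2).

(* u : [a,b] -> V is piecewise continuous: there is a finite partition
   a = p_0 < p_1 < ... < p_k = b such that on each open piece (p_j, p_{j+1})
   u coincides with a function continuous on the closed piece [p_j, p_{j+1}]
   (i.e. u is continuous on the open piece with finite one-sided limits). *)
Definition piecewise_continuous {V : normedModType R} (a b : R) (u : R -> V) : Prop :=
  exists s : seq R,
    [/\ path <%R a s, last a s = b &
        forall k, (k < size s)%N ->
          exists v : R -> V,
            {within `[nth b (a :: s) k, nth b s k], continuous v} /\
            (forall t, nth b (a :: s) k < t < nth b s k -> u t = v t)].

Definition admissible_control {m : nat} (T : nat) (rho : R) (u : R -> 'rV[R]_m) : Prop :=
  piecewise_continuous 0 T%:R u /\ (forall t, 0 <= t <= T%:R -> enorm (u t) <= rho).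

(* x solves  x' = f(x, u)  on [a,b] with x(a) = xa (classical solution for a
   piecewise continuous control: x is continuous on [a,b] and differentiable
   with the prescribed derivative at all interior points outside a finite set). *)
Definition ode_solution {nx m : nat} (f : 'rV[R]_nx * 'rV[R]_m -> 'rV[R]_nx)
    (u : R -> 'rV[R]_m) (a b : R) (xa : 'rV[R]_nx) (x : R -> 'rV[R]_nx) : Prop :=
  [/\ x a = xa, {within `[a, b], continuous x} &
      exists s : seq R, forall t, a < t < b -> t \notin s ->
        is_derive t 1 x (f (x t, u t))].

(* The hybrid system trajectory: xs i (1 <= i <= T) is the piece x_i on [i-1, i]. *)
Definition hybrid_trajectory {nx m ny : nat} (T : nat)
    (f : 'rV[R]_nx * 'rV[R]_m -> 'rV[R]_nx) (g : 'rV[R]_nx -> 'rV[R]_ny -> 'rV[R]_nx)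
    (x0 : 'rV[R]_nx) (u : R -> 'rV[R]_m) (y : nat -> 'rV[R]_ny)
    (xs : nat -> R -> 'rV[R]_nx) : Prop :=
  ode_solution f u 0 1 x0 (xs 1%N) /\
  (forall i, (2 <= i <= T)%N ->
     ode_solution f u (i.-1)%:R i%:R (g (xs i.-1 (i.-1)%:R) (y i.-1)) (xs i)).

Definition final_state {nx ny : nat} (T : nat) (g : 'rV[R]_nx -> 'rV[R]_ny -> 'rV[R]_nx)
    (y : nat -> 'rV[R]_ny) (xs : nat -> R -> 'rV[R]_nx) : 'rV[R]_nx :=
  g (xs T T%:R) (y T).

Definition poly_bound {ny : nat} (i : nat) (K : seq (seq nat)) (alpha : seq nat -> R)
    (y : nat -> 'rV[R]_ny) : R :=
  \sum_(j <- K) alpha j * \prod_(mm < i.-1) enorm (y mm.+1) ^+ nth 0%N j mm.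

End Defs.

(* On each unit interval the Lipschitz bound on f gives |f(x,u)|^2 <= a |x|^2 + b,
   so by Gronwall's lemma |x|^2 + 1 grows at most by the factor exp (1 + a + b) there.
   The jumps g are polynomial in |x| and |y|, hence the state on [i-1, i] is bounded by
   an expression built from |y_1|, ..., |y_(i-1)| by sums, products and powers.  Any such
   expression is at most M * prod_m (1 + |y_m|)^D, and (1 + a)^E <= 2^E (1 + a^E)
   expands this product into monomials prod_m |y_m|^(j_m) with every j_m in {0, E}.
   The polynomial growth of c and h then gives the claimed bounds. *)

From HB Require Import structures.
From mathcomp Require Import all_boot all_order all_algebra.
From mathcomp Require Import all_classical all_reals all_analysis.
From mathcomp Require Import ring lra.
Import Order.TTheory GRing.Theory Num.Theory.
Import numFieldNormedType.Exports.
Local Open Scope classical_set_scope.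
Local Open Scope ring_scope.
Set Implicit Arguments. Unset Strict Implicit.

Section SquaredNorm.
Variables (R : realType) (n : nat).
Implicit Types v w : 'rV[R]_n.

Definition enorm2 v : R := \sum_(i < n) v ord0 i ^+ 2.

Lemma enorm2_ge0 v : 0 <= enorm2 v.
Proof. by apply: sumr_ge0 => i _; rewrite sqr_ge0. Qed.

Lemma sqr_enorm v : enorm v ^+ 2 = enorm2 v.
Proof. by rewrite /enorm sqr_sqrtr // enorm2_ge0. Qed.

Lemma enorm_ge0 v : 0 <= enorm v.
Proof. exact: sqrtr_ge0. Qed.

Lemma enorm0 : enorm (0 : 'rV[R]_n) = 0.
Proof. by rewrite /enorm big1 ?sqrtr0 // => i _; rewrite mxE expr0n. Qed.

Lemma enorm2_le_sub v w : enorm2 v <= 2 * enorm2 (v - w) + 2 * enorm2 w.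
Proof.
rewrite /enorm2 !mulr_sumr -big_split /=; apply: ler_sum => i _.
rewrite !mxE; have := sqr_ge0 (v ord0 i - 2 * w ord0 i); rewrite !expr2; nra.
Qed.

Lemma dot2_le_enorm2 v w : \sum_(i < n) 2 * v ord0 i * w ord0 i <= enorm2 v + enorm2 w.
Proof.
rewrite /enorm2 -big_split /=; apply: ler_sum => i _.
have := sqr_ge0 (v ord0 i - w ord0 i); rewrite !expr2; nra.
Qed.

Lemma enorm2E : enorm2 = \sum_(i < n) (fun v : 'rV[R]_n => v ord0 i ^+ 2).
Proof. by apply/funext => v; rewrite fct_sumE. Qed.

Lemma continuous_enorm2 : continuous enorm2.
Proof.
rewrite enorm2E; elim/big_rec: _ => [|i F _ cF] v; first exact: cst_continuous.
apply: continuousD (cF v).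
exact: continuous_comp (@coord_continuous R 1 n ord0 i v) (@exprn_continuous R 2 _).
Qed.

Lemma is_derive_enorm2 (x : R -> 'rV[R]_n) (t : R) (D : 'rV[R]_n) : is_derive t 1 x D ->
  is_derive t 1 (enorm2 \o x) (\sum_(i < n) 2 * x t ord0 i * D ord0 i).
Proof.
move=> xD; have dx : derivable x t 1 by apply: ex_derive; exact: xD.
have coordD i : is_derive t 1 (fun s => x s ord0 i) (D ord0 i).
  have := derive_mx dx; rewrite derive_val => eD.
  by apply: DeriveDef; [exact: (derivable_mxP x t 1).1 dx ord0 i | rewrite eD mxE].
have sqD i := is_deriveX 2 (coordD i).
have -> : enorm2 \o x = \sum_(i < n) (fun s => x s ord0 i ^+ 2).
  by apply/funext => s; rewrite /comp enorm2E !fct_sumE.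
apply: is_derive_eq (is_derive_sum sqD) _.
by apply: eq_bigr => i _; rewrite expr1.
Qed.

End SquaredNorm.

Section Gronwall.
Variable R : realType.

Lemma ler0_derive1_le_cc_fin (W : R -> R) (s : seq R) (a b : R) : a <= b ->
  {within `[a, b], continuous W} ->
  (forall t, a < t < b -> t \notin s -> derivable W t 1 /\ (W^`())%classic t <= 0) ->
  W b <= W a.
Proof.
elim: s a b => [|p s IH] a b ab cW dW.
  have a_in : a \in `[a, b] by rewrite in_itv /= lexx ab.
  have b_in : b \in `[a, b] by rewrite in_itv /= lexx ab andbT.
  by apply: (ler0_derive1_le_cc _ _ cW b_in a_in ab) => t;
    rewrite in_itv /= => /dW /(_ isT) [].
have subW c d : a <= c -> d <= b -> {within `[c, d], continuous W}.
  move=> ac db; apply: continuous_subspaceW cW => r /=.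
  by rewrite !in_itv /= => /andP[cr rd]; rewrite (le_trans ac cr) (le_trans rd db).
case: (boolP (a < p < b)) => [/andP[ap pb]|pab]; last first.
  apply: IH => // t tab ts; apply: dW => //.
  by rewrite in_cons negb_or ts andbT; apply: contraNneq pab => <-.
apply: (@le_trans _ _ (W p)); apply: IH.
- exact: ltW.
- exact: subW (ltW ap) (lexx b).
- move=> t /andP[pt tb] ts; apply: dW; first by rewrite (lt_trans ap pt).
  by rewrite in_cons negb_or ts andbT gt_eqF.
- exact: ltW.
- exact: subW (lexx a) (ltW pb).
- move=> t /andP[a_t tp] ts; apply: dW; first by rewrite a_t (lt_trans tp pb).
  by rewrite in_cons negb_or ts andbT lt_eqF.
Qed.

Lemma is_derive_expRM (k t : R) : is_derive t 1 (fun s => expR (k * s)) (k * expR (k * t)).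
Proof.
have kD : is_derive t 1 (fun s : R => k * s) k.
  exact: is_derive_eq (is_deriveZ k (is_derive_id t 1)) (mulr1 k).
by apply: is_derive_eq (is_derive1_comp (is_derive_expR _) kD) _; rewrite mulrC.
Qed.

Lemma gronwall_affine (V : R -> R) (s : seq R) (A a b : R) :
  {within `[a, b], continuous V} ->
  (forall t, a < t < b -> t \notin s -> exists2 d, is_derive t 1 V d & d <= A * (V t + 1)) ->
  forall t, a <= t <= b -> V t + 1 <= (V a + 1) * expR (A * (t - a)).
Proof.
move=> cV dV t /andP[a_t tb].
pose E r := expR (- A * r); pose W r := (V r + 1) * E r.
have cE : continuous E.
  move=> r; apply: differentiable_continuous; apply/derivable1_diffP.
  by apply: ex_derive; exact: is_derive_expRM.
have Wta : W t <= W a.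
  apply: (ler0_derive1_le_cc_fin (s := s)) => //.
    move=> r; change W with ((V \+ cst 1) \* E).
    apply: continuousM; last exact: continuous_subspaceT cE r.
    apply: continuousD; last exact: cst_continuous.
    apply: continuous_subspaceW cV r => r' /=.
    by rewrite !in_itv /= => /andP[-> r't]; rewrite (le_trans r't tb).
  move=> r /andP[ar rt] rs.
  have [d Vd d_le] : exists2 d, is_derive r 1 V d & d <= A * (V r + 1).
    by apply: dV rs; rewrite ar (lt_le_trans rt tb).
  have WD := is_deriveM (is_deriveD Vd (is_derive_cst (1 : R) r 1)) (is_derive_expRM (- A) r).
  have -> : W = (V + cst 1) * E by [].
  split; first by apply: ex_derive; exact: WD.
  rewrite derive1E derive_val /GRing.scale /= addr0.
  have -> : (V + cst 1) r = V r + 1 by [].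
  have := expR_gt0 (- A * r); set e := expR _; nra.
have EtE : E t * expR (A * t) = 1 by rewrite -expRD mulNr addNr expR0.
have -> : expR (A * (t - a)) = E a * expR (A * t) by rewrite -expRD; congr expR; ring.
have -> : V t + 1 = W t * expR (A * t) by rewrite /W -mulrA EtE mulr1.
by rewrite mulrA; apply: ler_wpM2r; [exact: expR_ge0 | exact: Wta].
Qed.

Lemma ode_solution_enorm2_le (nx m : nat) (f : 'rV[R]_nx * 'rV[R]_m -> 'rV[R]_nx)
    (U : set 'rV[R]_m) (p q : R) (u : R -> 'rV[R]_m) (a b : R) (xa : 'rV[R]_nx) x :
  0 <= p -> 0 <= q -> (forall x u, U u -> enorm2 (f (x, u)) <= p * enorm2 x + q) ->
  (forall t, a < t < b -> U (u t)) -> ode_solution f u a b xa x ->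
  forall t, a <= t <= b ->
  enorm2 (x t) + 1 <= (enorm2 xa + 1) * expR ((1 + p + q) * (t - a)).
Proof.
move=> p0 q0 f_growth uU [<- cx [s xD]].
apply: (gronwall_affine (V := fun t => enorm2 (x t)) (s := s)).
  by apply: within_continuous_comp cx => v _; exact: continuous_enorm2.
move=> t tab ts; exists (\sum_(i < nx) 2 * x t ord0 i * f (x t, u t) ord0 i).
  exact: is_derive_enorm2 (xD t tab ts).
have := dot2_le_enorm2 (x t) (f (x t, u t)); have := f_growth (x t) _ (uU t tab).
have := enorm2_ge0 (x t); rewrite /=; nra.
Qed.

Lemma lipschitz_enorm2_growth (nx m : nat) (f : 'rV[R]_nx * 'rV[R]_m -> 'rV[R]_nx)
    (rho K : R) : 0 <= K ->
  (forall x' x'' u' u'', enorm u' <= rho -> enorm u'' <= rho ->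
     enorm (f (x', u') - f (x'', u'')) <= K * (enorm (x' - x'') + enorm (u' - u''))) ->
  forall x u, enorm u <= rho ->
  enorm2 (f (x, u)) <= 4 * K ^+ 2 * enorm2 x + (4 * K ^+ 2 * rho ^+ 2 + 2 * enorm2 (f (0, 0))).
Proof.
move=> K0 f_lip x u u_rho.
have rho0 : 0 <= rho := le_trans (enorm_ge0 u) u_rho.
have := f_lip x 0 u 0 u_rho; rewrite enorm0 !subr0 => /(_ rho0) fl.
have sub_le : enorm2 (f (x, u) - f (0, 0)) <= 2 * K ^+ 2 * enorm2 x + 2 * K ^+ 2 * rho ^+ 2.
  have e_le : enorm (f (x, u) - f (0, 0)) <= K * (enorm x + rho).
    by apply: le_trans fl _; rewrite ler_wpM2l // lerD2l.
  have := lerXn2r 2 (enorm_ge0 _) (le_trans (enorm_ge0 _) e_le) e_le.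
  rewrite -!sqr_enorm; have := mulr_ge0 (sqr_ge0 K) (sqr_ge0 (enorm x - rho)); nra.
have := enorm2_le_sub (f (x, u)) (f (0, 0)); lra.
Qed.

End Gronwall.

Section PolynomialBounds.
Variables (R : realType) (ny : nat).
Implicit Types (y : nat -> 'rV[R]_ny) (F G : (nat -> 'rV[R]_ny) -> R).

(* Observations are numbered from 1, as in [poly_bound]. *)
Definition obs_weight y k : R := \prod_(i < k) (1 + enorm (y i.+1)).

Lemma obs_weight_ge1 y k : 1 <= obs_weight y k.
Proof.
elim: k => [|k IH]; first by rewrite /obs_weight big_ord0.
rewrite /obs_weight big_ord_recr /= -/(obs_weight y k).
have := enorm_ge0 (y k.+1); nra.
Qed.

Lemma obs_weight_homo y : {homo obs_weight y : k k' / (k <= k')%N >-> k <= k'}.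
Proof.
move=> k k' /subnK <-; elim: (k' - k)%N => [|d IH] //.
apply: le_trans IH _; rewrite addSn /obs_weight big_ord_recr /= -/(obs_weight y (d + k)).
have := enorm_ge0 (y (d + k).+1); have := obs_weight_ge1 y (d + k); nra.
Qed.

Definition poly_bounded k F :=
  exists M D, 0 <= M /\ forall y, F y <= M * obs_weight y k ^+ D.

Lemma poly_bounded_cst k (a : R) : poly_bounded k (fun _ => a).
Proof. by exists `|a|, 0%N; split => // y; rewrite expr0 mulr1 ler_norm. Qed.

Lemma poly_boundedD k F G :
  poly_bounded k F -> poly_bounded k G -> poly_bounded k (fun y => F y + G y).
Proof.
move=> [M [D [M0 FM]]] [M' [D' [M'0 GM']]]; exists (M + M'), (D + D')%N.
split=> [|y]; first exact: addr_ge0.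
have weightX E : (E <= D + D')%N -> obs_weight y k ^+ E <= obs_weight y k ^+ (D + D').
  by apply: ler_weXn2l; exact: obs_weight_ge1.
rewrite mulrDl; apply: lerD.
  by apply: le_trans (FM y) _; apply: ler_wpM2l; rewrite // weightX ?leq_addr.
by apply: le_trans (GM' y) _; apply: ler_wpM2l; rewrite // weightX ?leq_addl.
Qed.

Lemma poly_boundedM k F G : (forall y, 0 <= F y) -> (forall y, 0 <= G y) ->
  poly_bounded k F -> poly_bounded k G -> poly_bounded k (fun y => F y * G y).
Proof.
move=> F0 G0 [M [D [M0 FM]]] [M' [D' [M'0 GM']]]; exists (M * M'), (D + D')%N.
by split=> [|y]; [exact: mulr_ge0 | rewrite exprD mulrACA ler_pM].
Qed.

Lemma poly_boundedX k F n : (forall y, 0 <= F y) ->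
  poly_bounded k F -> poly_bounded k (fun y => F y ^+ n).
Proof.
move=> F0 FP; elim: n => [|n IH]; first exact: poly_bounded_cst.
have -> : (fun y => F y ^+ n.+1) = (fun y => F y * F y ^+ n).
  by apply/funext => y; rewrite exprS.
by apply: poly_boundedM => // y; exact: exprn_ge0.
Qed.

Lemma poly_bounded_addMX k F (a b : R) n : 0 <= b -> (forall y, 0 <= F y) ->
  poly_bounded k F -> poly_bounded k (fun y => a + b * F y ^+ n).
Proof.
move=> b0 F0 FP; apply: poly_boundedD (poly_bounded_cst k a) _.
apply: poly_boundedM => [y|y||]; rewrite ?exprn_ge0 //; first exact: poly_bounded_cst.
exact: poly_boundedX.
Qed.

Lemma poly_bounded_widen k k' F : (k <= k')%N -> poly_bounded k F -> poly_bounded k' F.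
Proof.
move=> kk' [M [D [M0 FM]]]; exists M, D; split => // y.
apply: le_trans (FM y) _; apply: ler_wpM2l => //.
by rewrite lerXn2r ?obs_weight_homo // nnegrE (le_trans ler01) ?obs_weight_ge1.
Qed.

Lemma poly_bounded0 F : poly_bounded 0 F -> exists2 M : R, 0 < M & forall y, F y <= M.
Proof.
move=> [M [D [M0 FM]]]; exists (M + 1) => [|y]; first lra.
by apply: le_trans (FM y) _; rewrite /obs_weight big_ord0 expr1n mulr1; lra.
Qed.

Lemma poly_bounded_obs k : poly_bounded k.+1 (fun y => enorm (y k.+1)).
Proof.
exists 1, 1%N; split => // y; rewrite expr1 mul1r /obs_weight big_ord_recr /=.
have := enorm_ge0 (y k.+1); have := obs_weight_ge1 y k; rewrite /obs_weight; nra.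
Qed.

Fixpoint exponent_seqs (n E : nat) : seq (seq nat) :=
  if n is n'.+1 then
    [seq 0%N :: j | j <- exponent_seqs n' E] ++ [seq E :: j | j <- exponent_seqs n' E]
  else [:: [::]].

Lemma size_exponent_seqs n E j : j \in exponent_seqs n E -> size j = n.
Proof.
elim: n j => [|n IH] j /=; first by rewrite inE => /eqP ->.
by rewrite mem_cat => /orP[] /mapP [j' /IH j'n ->] /=; rewrite j'n.
Qed.

Lemma uniq_exponent_seqs n E : (0 < E)%N -> uniq (exponent_seqs n E).
Proof.
move=> E0; elim: n => [|n IH] //=.
rewrite cat_uniq !map_inj_uniq ?IH ?andbT //=; try by move=> ? ? [].
apply/hasPn => _ /mapP [j _ ->]; apply/mapP => [[j' _ [E_eq0 _]]].
by rewrite E_eq0 in E0.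
Qed.

Lemma prod_1DX_exponent_seqs n E (b : nat -> R) :
  \prod_(i < n) (1 + b i ^+ E) =
  \sum_(j <- exponent_seqs n E) \prod_(i < n) b i ^+ nth 0%N j i.
Proof.
elim: n b => [|n IH] b /=; first by rewrite big_ord0 big_seq1 big_ord0.
rewrite big_ord_recl (IH (fun i => b i.+1)) big_cat !big_map mulrDl mul1r big_distrr /=.
by congr (_ + _); apply: eq_bigr => j _; rewrite big_ord_recl /= ?expr0 ?mul1r.
Qed.

Lemma expr1D_le (a : R) E : 0 <= a -> (1 + a) ^+ E <= 2 ^+ E * (1 + a ^+ E).
Proof.
move=> a0; have aE := exprn_ge0 E a0; have [a_le1|a_gt1] := lerP a 1.
  apply: (@le_trans _ _ (2 ^+ E)); first by rewrite lerXn2r ?nnegrE; lra.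
  by rewrite ler_peMr ?exprn_ge0 //; lra.
apply: (@le_trans _ _ ((2 * a) ^+ E)); first by rewrite lerXn2r ?nnegrE; lra.
by rewrite exprMn ler_wpM2l ?exprn_ge0 //; lra.
Qed.

Lemma poly_bounded_poly_bound i F : poly_bounded i.-1 F ->
  exists (K : seq (seq nat)) (alpha : seq nat -> R),
  [/\ uniq K, forall j, j \in K -> size j = i.-1 /\ 0 < alpha j &
      forall y, F y <= poly_bound i K alpha y].
Proof.
(* The exponent is raised to [D.+1 > 0] so that the exponent sequences are distinct. *)
move=> [M [D [M0 FM]]]; set n := i.-1; set E := D.+1.
exists (exponent_seqs n E), (fun=> (M + 1) * 2 ^+ (E * n)); split.
- exact: uniq_exponent_seqs.
- move=> j jK; split; first exact: size_exponent_seqs jK.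
  by rewrite mulr_gt0 ?exprn_gt0 //; lra.
move=> y; apply: le_trans (FM y) _; have W1 := obs_weight_ge1 y n.
rewrite /poly_bound -/n -big_distrr /= -mulrA.
apply: (@le_trans _ _ ((M + 1) * obs_weight y n ^+ E)).
  apply: ler_pM; [exact: M0 | exact: exprn_ge0 (le_trans ler01 W1) | lra |].
  exact: ler_weXn2l W1 _ _ (leqnSn D).
apply: ler_wpM2l; first lra.
rewrite -(prod_1DX_exponent_seqs n E (fun k => enorm (y k.+1))) /obs_weight -prodrXl exprM.
have -> : (2 ^+ E) ^+ n = \prod_(k < n) (2 ^+ E : R) by rewrite prodr_const card_ord.
rewrite -big_split /=; apply: ler_prod => k _.
by rewrite exprn_ge0 ?addr_ge0 ?enorm_ge0 ?expr1D_le ?enorm_ge0.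
Qed.

Lemma poly_bounded_poly_bound_family (F : nat -> (nat -> 'rV[R]_ny) -> R) :
  (forall i, poly_bounded i.-1 (F i)) ->
  exists (KK : nat -> seq (seq nat)) (alpha : nat -> seq nat -> R), forall i,
  [/\ uniq (KK i), forall j, j \in KK i -> size j = i.-1 /\ 0 < alpha i j &
      forall y, F i y <= poly_bound i (KK i) (alpha i) y].
Proof.
move=> FP; have /choice[Ka KaP] : forall i, exists Ka : seq (seq nat) * (seq nat -> R),
    [/\ uniq Ka.1, forall j, j \in Ka.1 -> size j = i.-1 /\ 0 < Ka.2 j &
        forall y, F i y <= poly_bound i Ka.1 Ka.2 y].
  by move=> i; have [K [alpha KP]] := poly_bounded_poly_bound (FP i); exists (K, alpha).
by exists (fun i => (Ka i).1), (fun i => (Ka i).2).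
Qed.

End PolynomialBounds.

Arguments poly_bounded_cst {R ny} k a.

Section PolyGrowth.
Variables (R : realType) (K2 K3 K4 K5 : R) (L1 L2 : nat).
Hypotheses (K2_ge0 : 0 <= K2) (K3_ge0 : 0 <= K3) (K4_ge0 : 0 <= K4) (K5_ge0 : 0 <= K5).

Definition poly_growth (r s : R) : R :=
  K2 + K3 * r ^+ L1 + K4 * s ^+ L2 + K5 * r ^+ L1 * s ^+ L2.

Lemma poly_growth_ge0 r s : 0 <= r -> 0 <= s -> 0 <= poly_growth r s.
Proof. by move=> r0 s0; rewrite !addr_ge0 ?mulr_ge0 ?exprn_ge0. Qed.

Lemma poly_growth_homo r r' s : 0 <= r -> r <= r' -> 0 <= s ->
  poly_growth r s <= poly_growth r' s.
Proof.
move=> r0 rr' s0; have rX : r ^+ L1 <= r' ^+ L1 by rewrite lerXn2r // nnegrE (le_trans r0).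
apply: lerD; last by apply: ler_wpM2r; [exact: exprn_ge0 | exact: ler_wpM2l].
by rewrite lerD2r lerD2l; apply: ler_wpM2l.
Qed.

Lemma poly_bounded_poly_growth ny k (F G : (nat -> 'rV[R]_ny) -> R) :
  (forall y, 0 <= F y) -> (forall y, 0 <= G y) ->
  poly_bounded k F -> poly_bounded k G -> poly_bounded k (fun y => poly_growth (F y) (G y)).
Proof.
move=> F0 G0 FP GP.
have FX y : 0 <= F y ^+ L1 by exact: exprn_ge0.
have GX y : 0 <= G y ^+ L2 by exact: exprn_ge0.
have FXP := poly_boundedX L1 F0 FP; have GXP := poly_boundedX L2 G0 GP.
have cstM a H : 0 <= a -> (forall y, 0 <= H y) -> poly_bounded k H ->
    poly_bounded k (fun y => a * H y).
  by move=> a0 H0; apply: poly_boundedM => //; exact: poly_bounded_cst.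
apply: poly_boundedD; first apply: poly_boundedD; first apply: poly_boundedD.
- exact: poly_bounded_cst.
- exact: cstM.
- exact: cstM.
apply: poly_boundedM => // [y|]; first by rewrite mulr_ge0.
exact: cstM.
Qed.
End PolyGrowth.

Section HybridTrajectory.
Variables (R : realType) (T m nx ny : nat) (rho K : R).
Variables (f : 'rV[R]_nx * 'rV[R]_m -> 'rV[R]_nx) (g : 'rV[R]_nx -> 'rV[R]_ny -> 'rV[R]_nx).
Variables (gb : R -> R -> R) (x0 : 'rV[R]_nx).
Hypothesis K_ge0 : 0 <= K.
Hypothesis f_lip : forall x' x'' u' u'', enorm u' <= rho -> enorm u'' <= rho ->
  enorm (f (x', u') - f (x'', u'')) <= K * (enorm (x' - x'') + enorm (u' - u'')).
Hypothesis g_le : forall x y, enorm (g x y) <= gb (enorm x) (enorm y).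
Hypothesis gb_ge0 : forall r s, 0 <= r -> 0 <= s -> 0 <= gb r s.
Hypothesis gb_homo : forall r r' s, 0 <= r -> r <= r' -> 0 <= s -> gb r s <= gb r' s.

Definition flow_rate : R := 1 + 4 * K ^+ 2 + (4 * K ^+ 2 * rho ^+ 2 + 2 * enorm2 (f (0, 0))).

Definition flow_bound (r : R) : R := (r ^+ 2 + 1) * expR flow_rate.

Lemma flow_rate_ge0 : 0 <= flow_rate.
Proof.
have := sqr_ge0 K; have := sqr_ge0 rho; have := enorm2_ge0 (f (0, 0)); rewrite /flow_rate.
nra.
Qed.

Lemma flow_bound_ge0 r : 0 <= flow_bound r.
Proof. by rewrite mulr_ge0 ?addr_ge0 ?sqr_ge0 ?expR_ge0. Qed.

Lemma flow_bound_ge r : r <= flow_bound r.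
Proof.
have e1 : 1 <= expR flow_rate by rewrite -expR0 ler_expR flow_rate_ge0.
have := sqr_ge0 (r - 1); have := sqr_ge0 r; rewrite /flow_bound; nra.
Qed.

Lemma flow_bound_homo r r' : 0 <= r -> r <= r' -> flow_bound r <= flow_bound r'.
Proof.
move=> r0 rr'; apply: ler_wpM2r; first exact: expR_ge0.
by rewrite lerD2r lerXn2r // nnegrE (le_trans r0).
Qed.

Lemma ode_solution_flow_bound (u : R -> 'rV[R]_m) (a b : R) (xa : 'rV[R]_nx) x :
  (forall t, a < t < b -> enorm (u t) <= rho) -> b - a <= 1 ->
  ode_solution f u a b xa x -> forall t, a <= t <= b -> enorm (x t) <= flow_bound (enorm xa).
Proof.
move=> u_rho ba ode t tab.
have K2 := sqr_ge0 K; have rho2 := sqr_ge0 rho; have f0 := enorm2_ge0 (f (0, 0)).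
have p0 : 0 <= 4 * K ^+ 2 by lra.
have q0 : 0 <= 4 * K ^+ 2 * rho ^+ 2 + 2 * enorm2 (f (0, 0)) by nra.
have := ode_solution_enorm2_le p0 q0 (lipschitz_enorm2_growth K_ge0 f_lip) u_rho ode tab.
rewrite -/flow_rate -!sqr_enorm => x_le.
have rate_le : flow_rate * (t - a) <= flow_rate.
  case/andP: tab => _ tb; rewrite -[leRHS]mulr1.
  by apply: ler_wpM2l; [exact: flow_rate_ge0 | apply: le_trans ba; rewrite lerD2r].
apply: le_trans (le_trans x_le _); first by have := sqr_ge0 (enorm (x t) - 1); nra.
by apply: ler_wpM2l; [rewrite addr_ge0 ?sqr_ge0 | rewrite ler_expR].
Qed.

Fixpoint state_bound k (y : nat -> 'rV[R]_ny) : R :=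
  if k is k'.+1 then flow_bound (gb (state_bound k' y) (enorm (y k)))
  else flow_bound (enorm x0).

Lemma state_bound_ge0 k y : 0 <= state_bound k y.
Proof. by case: k => [|k]; exact: flow_bound_ge0. Qed.

Lemma poly_bounded_state_bound :
  (forall k (F G : (nat -> 'rV[R]_ny) -> R), (forall y, 0 <= F y) -> (forall y, 0 <= G y) ->
     poly_bounded k F -> poly_bounded k G -> poly_bounded k (fun y => gb (F y) (G y))) ->
  forall k, poly_bounded k (state_bound k).
Proof.
move=> gb_poly.
have flow_poly k (F : (nat -> 'rV[R]_ny) -> R) : (forall y, 0 <= F y) -> poly_bounded k F ->
    poly_bounded k (fun y => flow_bound (F y)).
  move=> F0 FP; apply: poly_boundedM => [y|y||]; rewrite ?expR_ge0 ?addr_ge0 ?sqr_ge0 //.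
    exact: poly_boundedD (poly_boundedX 2 F0 FP) (poly_bounded_cst _ _).
  exact: poly_bounded_cst.
elim=> [|k IH]; first exact: poly_bounded_cst.
apply: flow_poly => [y|]; first by rewrite gb_ge0 ?state_bound_ge0 ?enorm_ge0.
apply: gb_poly => [y|y||]; rewrite ?state_bound_ge0 ?enorm_ge0 //.
  exact: poly_bounded_widen (leqnSn k) IH.
exact: poly_bounded_obs.
Qed.

Lemma hybrid_trajectory_le (u : R -> 'rV[R]_m) y xs :
  admissible_control T rho u -> hybrid_trajectory T f g x0 u y xs ->
  forall k, (k < T)%N -> forall t, k%:R <= t <= k.+1%:R -> enorm (xs k.+1 t) <= state_bound k y.
Proof.
move=> [_ u_rho] [xs1 xsS].
have u_rho' a b : 0 <= a -> b <= T%:R -> forall t, a < t < b -> enorm (u t) <= rho.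
  move=> a0 bT t /andP[a_t tb]; apply: u_rho.
  by rewrite (le_trans a0 (ltW a_t)) (le_trans (ltW tb) bT).
elim=> [|k IH] kT t kt.
  move: kt; rewrite /= mulr1n => kt.
  apply: (ode_solution_flow_bound _ _ xs1 kt); last by rewrite subr0.
  by apply: u_rho'; rewrite ?lexx ?ler1n.
have xsk := xsS k.+2; rewrite kT /= in xsk.
have len1 : k.+2%:R - k.+1%:R <= 1 :> R by rewrite -natrB // subSnn.
have uk : forall t, k.+1%:R < t < k.+2%:R -> enorm (u t) <= rho.
  by apply: u_rho'; rewrite ?ler0n ?ler_nat.
rewrite /=; apply: le_trans (ode_solution_flow_bound uk len1 (xsk isT) kt) _.
apply: flow_bound_homo; first exact: enorm_ge0.
apply: le_trans (g_le _ _) _; apply: gb_homo; rewrite ?enorm_ge0 //.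
by apply: IH; [exact: ltnW | rewrite lexx ler_nat leqnSn].
Qed.

Lemma final_state_le (u : R -> 'rV[R]_m) y xs : (0 < T)%N ->
  admissible_control T rho u -> hybrid_trajectory T f g x0 u y xs ->
  enorm (final_state T g y xs) <= state_bound T y.
Proof.
move=> T0 adm hyb.
have xT : enorm (xs T T%:R) <= state_bound T.-1 y.
  rewrite -{1}(prednK T0); apply: (hybrid_trajectory_le adm hyb); rewrite prednK //.
  by rewrite lexx ler_nat leq_pred.
rewrite /final_state -[in state_bound T y](prednK T0) /= prednK //.
apply: le_trans (flow_bound_ge _); apply: le_trans (g_le _ _) _.
by apply: gb_homo; rewrite ?enorm_ge0.
Qed.

Lemma hybrid_trajectory_poly_bounded : (0 < T)%N ->
  (forall k (F G : (nat -> 'rV[R]_ny) -> R), (forall y, 0 <= F y) -> (forall y, 0 <= G y) ->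
     poly_bounded k F -> poly_bounded k G -> poly_bounded k (fun y => gb (F y) (G y))) ->
  exists B : nat -> (nat -> 'rV[R]_ny) -> R,
  [/\ forall k, poly_bounded k (B k), forall k y, 0 <= B k y &
      forall u y xs, admissible_control T rho u -> hybrid_trajectory T f g x0 u y xs ->
      (forall k (t : R), (k < T)%N -> k%:R <= t <= k.+1%:R -> enorm (xs k.+1 t) <= B k y)
      /\ enorm (final_state T g y xs) <= B T y].
Proof.
move=> T0 gb_poly; exists state_bound; split.
- exact: poly_bounded_state_bound.
- exact: state_bound_ge0.
move=> u y xs adm hyb; split; last exact: final_state_le T0 adm hyb.
by move=> k t kT /(hybrid_trajectory_le adm hyb kT).
Qed.

End HybridTrajectory.

Unset Implicit Arguments.
Theorem proposition7 (R : realType) (T m nx ny : nat) (rho_max : R)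
  (f : 'rV[R]_nx * 'rV[R]_m -> 'rV[R]_nx)
  (g : 'rV[R]_nx -> 'rV[R]_ny -> 'rV[R]_nx)
  (c : 'rV[R]_nx -> 'rV[R]_m -> R) (h : 'rV[R]_nx -> R)
  (K1 K2 K3 K4 K5 K6 K7 : R) (L1 L2 L3 : nat) (x0 : 'rV[R]_nx) :
  (0 < T)%N -> (0 < m)%N -> (0 < nx)%N -> (0 < ny)%N -> 0 < rho_max ->
  (* f continuously differentiable *)
  (forall p, differentiable f p) ->
  (forall v, continuous (fun p => 'd f p v)) ->
  (* f Lipschitz *)
  1 <= K1 ->
  (forall x' x'' u' u'', enorm u' <= rho_max -> enorm u'' <= rho_max ->
     enorm (f (x', u') - f (x'', u'')) <= K1 * (enorm (x' - x'') + enorm (u' - u''))) ->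
  (* g continuous, differentiable in x, polynomial bounds *)
  continuous (fun p : 'rV[R]_nx * 'rV[R]_ny => g p.1 p.2) ->
  (forall x y, differentiable (g ^~ y) x) ->
  0 <= K2 -> 0 <= K3 -> 0 <= K4 -> 0 <= K5 -> (0 < L1)%N -> (0 < L2)%N ->
  (forall x y, enorm (g x y) <=
     K2 + K3 * enorm x ^+ L1 + K4 * enorm y ^+ L2 + K5 * enorm x ^+ L1 * enorm y ^+ L2) ->
  (forall x y v, enorm ('d (g ^~ y) x v) <=
     (K2 + K3 * enorm x ^+ L1 + K4 * enorm y ^+ L2 + K5 * enorm x ^+ L1 * enorm y ^+ L2)
     * enorm v) ->
  (* c continuous, continuously differentiable in x; h differentiable *)
  continuous (fun p : 'rV[R]_nx * 'rV[R]_m => c p.1 p.2) ->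
  (forall u x, differentiable (c ^~ u) x) ->
  (forall u v, continuous (fun x => 'd (c ^~ u) x v)) ->
  (forall x, differentiable h x) ->
  0 <= K6 -> 0 <= K7 -> (0 < L3)%N ->
  (forall x u, enorm u <= rho_max -> `|c x u| <= K6 + K7 * enorm x ^+ L3) ->
  (forall x u v, enorm u <= rho_max ->
     `|'d (c ^~ u) x v| <= (K6 + K7 * enorm x ^+ L3) * enorm v) ->
  (forall x, `|h x| <= K6 + K7 * enorm x ^+ L3) ->
  (forall x v, `|'d h x v| <= (K6 + K7 * enorm x ^+ L3) * enorm v) ->
  exists alpha1 : R, 0 < alpha1 /\
  exists (KK : nat -> seq (seq nat)) (alpha : nat -> seq nat -> R),
    (forall i, (2 <= i <= T.+1)%N ->
       uniq (KK i) /\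
       (forall j, j \in KK i -> size j = i.-1 /\ 0 < alpha i j)) /\
    (forall (u : R -> 'rV[R]_m) (y : nat -> 'rV[R]_ny) (xs : nat -> R -> 'rV[R]_nx),
       admissible_control T rho_max u ->
       hybrid_trajectory T f g x0 u y xs ->
       (forall t, 0 <= t <= 1 -> `|c (xs 1%N t) (u t)| <= alpha1) /\
       (forall i t, (2 <= i <= T)%N -> (i.-1)%:R <= t <= i%:R ->
          `|c (xs i t) (u t)| <= poly_bound i (KK i) (alpha i) y) /\
       `|h (final_state T g y xs)| <= poly_bound T.+1 (KK T.+1) (alpha T.+1) y).
Proof.
move=> T0 _ _ _ _ _ _ K1_ge1 f_lip _ _ K2_ge0 K3_ge0 K4_ge0 K5_ge0 _ _ g_le _ _ _ _ _
  K6_ge0 K7_ge0 _ c_le _ h_le _.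
pose gb := poly_growth K2 K3 K4 K5 L1 L2.
have gb_ge0 r s : 0 <= r -> 0 <= s -> 0 <= gb r s by exact: poly_growth_ge0.
have gb_homo r r' s : 0 <= r -> r <= r' -> 0 <= s -> gb r s <= gb r' s.
  exact: poly_growth_homo.
have gb_poly := @poly_bounded_poly_growth R K2 K3 K4 K5 L1 L2 K3_ge0 K4_ge0 K5_ge0 ny.
have [B [B_poly B_ge0 B_traj]] :=
  hybrid_trajectory_poly_bounded x0 (le_trans ler01 K1_ge1) f_lip g_le gb_ge0 gb_homo T0 gb_poly.
pose F i y := K6 + K7 * B i.-1 y ^+ L3.
have F_poly i : poly_bounded i.-1 (F i) := poly_bounded_addMX K6 L3 K7_ge0 (B_ge0 _) (B_poly _).
have [alpha1 alpha1_gt0 F1_le] := poly_bounded0 (F_poly 1%N).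
have [KK [alpha KKP]] := poly_bounded_poly_bound_family F_poly.
exists alpha1; split => //; exists KK, alpha; split; first by move=> i _; have [] := KKP i.
move=> u y xs adm hyb; have [x_le xT_le] := B_traj u y xs adm hyb.
have growth_le (x : 'rV[R]_nx) r : enorm x <= r -> K6 + K7 * enorm x ^+ L3 <= K6 + K7 * r ^+ L3.
  move=> xr; rewrite lerD2l; apply: ler_wpM2l => //.
  by rewrite lerXn2r // nnegrE (le_trans (enorm_ge0 x)).
have cost_le k t : (k < T)%N -> k%:R <= t <= k.+1%:R -> `|c (xs k.+1 t) (u t)| <= F k.+1 y.
  move=> kT /andP[kt tk]; have [_ u_rho] := adm.
  apply: le_trans (c_le _ _ (u_rho t _)) (growth_le _ _ (x_le k t kT _)); last by rewrite kt tk.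
  by rewrite (le_trans _ kt) // (le_trans tk) // ler_nat.
have KK_le i := let: And3 _ _ Fi_le := KKP i in Fi_le y.
split; [|split].
- by move=> t t01; apply: le_trans (cost_le 0%N t T0 _) (F1_le y); rewrite mulr1n.
- by move=> [|k] t // /andP[_ kT] /(cost_le k t kT) /le_trans; apply.
exact: le_trans (h_le _) (le_trans (growth_le _ _ xT_le) (KK_le T.+1)).
Qed.
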